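(* Let $G$ be a finite group which is neither cyclic nor isomorphic to a direct product of a cyclic group of odd order and a generalized quaternion group. If $|Z(G)|$ has at least two distinct prime divisors, then the difference graph $\mathcal{D}(G)$ is connected and has diameter at most $5$.
   Context: For a finite group $G$ with identity $e$: the intersection power graph $\mathcal{G}_I(G)$ has vertex set $G$, two distinct non-identity vertices $x,y$ being adjacent iff $\langle x\rangle\cap\langle y\rangle\neq\{e\}$, and $e$ being adjacent to every other vertex. The power graph $\mathcal{P}(G)$ has vertex set $G$, two distinct vertices being adjacent iff one is a power of the other. The difference graph $\mathcal{D}(G)$ is the graph on vertex set $G$ with edge set $E(\mathcal{G}_I(G))\setminus E(\mathcal{P}(G))$, with all isolated vertices removed. $Z(G)$ denotes the center of $G$. The generalized quaternion group $Q_{2^n}$ ($n\ge 3$) is $\langle x,y\mid x^{2^{n-1}}=1,\ y^2=x^{2^{n-2}},\ y^{-1}xy=x^{-1}\rangle$. *)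

From mathcomp Require Import all_boot all_order all_fingroup all_solvable.
Set Implicit Arguments. Unset Strict Implicit. Unset Printing Implicit Defensive.
Local Open Scope group_scope.

Section Graphs.
Variable gT : finGroupType.

(* Intersection power graph adjacency on vertex set G (x, y in G assumed). *)
Definition ipg_adj (x y : gT) : bool :=
  (x != y) && [|| x == 1, y == 1 | <[x]> :&: <[y]> != 1].

Definition pg_adj (x y : gT) : bool :=
  (x != y) && ((x \in <[y]>) || (y \in <[x]>)).

Definition diff_adj (x y : gT) : bool := ipg_adj x y && ~~ pg_adj x y.

Definition diff_vert (G : {set gT}) : {set gT} :=
  [set x in G | [exists y in G, diff_adj x y]].

(* A walk x = s_0, s_1, ..., s_k = y of length k = size s in D(G). *)
Definition diff_walk (G : {set gT}) (x : gT) (s : seq gT) : bool :=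
  all (mem (diff_vert G)) s && path diff_adj x s.

Definition diff_connected_diam_le (G : {set gT}) (d : nat) : Prop :=
  (exists x, x \in diff_vert G) /\
  forall x y, x \in diff_vert G -> y \in diff_vert G ->
    exists s : seq gT, [/\ diff_walk G x s, last x s = y & size s <= d].

End Graphs.

From mathcomp Require Import all_boot all_order all_fingroup all_solvable.
Set Implicit Arguments. Unset Strict Implicit. Unset Printing Implicit Defensive.
Local Open Scope group_scope.

(* Pick central elements a, b of distinct prime orders and put c = a * b.
   Every vertex v of D(G) is a non-identity element of non-prime order, and it
   reaches c in at most two steps:
   - if exactly one of a, b lies in <[v]>, then v -- c, witnessed by that one;
   - if neither does, a proper nontrivial u in <[v]> of order prime to (say)
     #[a] gives v -- u * a -- c, witnessed by u and then by a;
   - if both do, G is not cyclic, so some primary part w of an element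
     outside <[v]> is itself outside <[v]>; if w has order prime to #[b],
     then w or w * b is a common neighbour of v and c.
   Joining two such walks at c gives walks of length at most 4. *)

Section DifferenceGraph.
Variable gT : finGroupType.
Implicit Types u v w x y z e f : gT.

Lemma cycle_mem_trans x y z : x \in <[y]> -> y \in <[z]> -> x \in <[z]>.
Proof.
move=> xy yz; have /subsetP yz_sub : <[y]> \subset <[z]> by rewrite cycle_subG.
exact: yz_sub.
Qed.

Lemma prime_cycleTI x y (H : {group gT}) :
  prime #[x] -> x \notin H -> y \in <[x]> -> y \in H -> y = 1.
Proof.
move=> px xH yx yH; have := prime_TIg (G := <[x]>%G) (H := H) px.
by rewrite cycle_subG => /(_ xH) TI; apply/set1gP; rewrite -TI inE yx.
Qed.

Lemma mem_cycleMl u e : commute u e -> coprime #[u] #[e] -> u \in <[u * e]>.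
Proof. by move=> cue co; apply: (subsetP (cycleMsub cue co)); apply: cycle_id. Qed.

Lemma mem_cycleMr u e : commute u e -> coprime #[u] #[e] -> e \in <[u * e]>.
Proof. by move=> cue co; rewrite cue mem_cycleMl // coprime_sym. Qed.

(* Raising to the power #[e] kills the e-component and is invertible on <[f]>. *)
Lemma coprime_mem_cycleM u e f :
  commute u e -> coprime #[f] #[e] -> f \in <[u * e]> -> f \in <[u]>.
Proof.
move=> cue co /cycleP[k fk].
have fe_u : f ^+ #[e] \in <[u]>.
  by rewrite fk -expgM mulnC expgM expgMn // expg_order mulg1 groupX ?mem_cycle.
have /eqP gen_fe : generator <[f]> (f ^+ #[e]) by rewrite generator_coprime.
by apply: cycle_mem_trans fe_u; rewrite -gen_fe cycle_id.
Qed.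

Lemma notin_cycleM u e v :
    commute u e -> coprime #[u] #[e] -> prime #[e] ->
  u \in <[v]> -> e \notin <[v]> -> v \notin <[u]> -> v \notin <[u * e]>.
Proof.
move=> cue co pe uv ev; apply: contra; rewrite cycleM // => /mulsgP[x y xu ye vxy].
have yv : y \in <[v]>.
  by rewrite -(mulKg x y) -vxy groupM ?groupV ?cycle_id ?(cycle_mem_trans xu uv).
by rewrite vxy (prime_cycleTI pe ev ye yv) mulg1.
Qed.

Lemma diff_adjC x y : diff_adj x y = diff_adj y x.
Proof.
by rewrite /diff_adj /ipg_adj /pg_adj eq_sym setIC orbCA [(x \in _) || _]orbC.
Qed.

Lemma diff_adj_witness x y e : e != 1 -> e \in <[x]> -> e \in <[y]> ->
  x \notin <[y]> -> y \notin <[x]> -> diff_adj x y.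
Proof.
move=> e1 ex ey xy yx; have x_neq_y : x != y.
  by apply: contraNneq xy => ->; apply: cycle_id.
rewrite /diff_adj /ipg_adj /pg_adj x_neq_y /= negb_or xy yx !andbT.
by apply/or3P/Or33/trivgPn; exists e; rewrite ?inE ?ex.
Qed.

Lemma diff_adj_composite x y : diff_adj x y -> x != 1 /\ ~~ prime #[x].
Proof.
rewrite /diff_adj /ipg_adj /pg_adj => /andP[/andP[xy Ixy]].
rewrite xy negb_or => /andP[xNy yNx].
have x1 : x != 1 by apply: contraNneq xNy => ->; apply: group1.
have y1 : y != 1 by apply: contraNneq yNx => ->; apply: group1.
split=> //; apply/negP=> px; move: Ixy.
by rewrite (negPf x1) (negPf y1) (prime_TIg (G := <[x]>%G) px) ?eqxx ?cycle_subG.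
Qed.

Lemma notin_prime_cycle v e : v != 1 -> ~~ prime #[v] -> prime #[e] -> v \notin <[e]>.
Proof.
move=> v1 npv pe; apply: contra npv => /order_dvdG ve.
by rewrite ((prime_nt_dvdP pe) _ ve) // order_eq1.
Qed.

Lemma diff_adj_mul u e v :
    commute u e -> coprime #[u] #[e] -> u != 1 -> prime #[e] ->
  u \in <[v]> -> e \notin <[v]> -> v \notin <[u]> -> diff_adj v (u * e).
Proof.
move=> cue co u1 pe uv ev vu.
apply: (diff_adj_witness u1 uv (mem_cycleMl cue co)); first exact: notin_cycleM.
by apply: contra ev; apply: cycle_mem_trans (mem_cycleMr cue co).
Qed.

Lemma diff_adj_via_mul u e f v :
    commute u e -> commute e f -> coprime #[u] #[e] -> coprime #[e] #[f] ->
    prime #[e] -> prime #[f] -> u \in <[v]> -> u != 1 -> v \notin <[u]> ->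
    e \notin <[v]> -> f \notin <[v]> ->
  diff_adj v (u * e) /\ diff_adj (u * e) (e * f).
Proof.
move=> cue cef coue coef pe pf uv u1 vu ev fv; split; first exact: diff_adj_mul.
apply: diff_adj_mul; rewrite -?order_gt1 ?prime_gt1 ?mem_cycleMr //.
- apply: contra fv => /(coprime_mem_cycleM cue) fu.
  by apply: cycle_mem_trans uv; apply: fu; rewrite coprime_sym.
- apply: contraNN u1 => ue_e; apply/eqP.
  exact: prime_cycleTI pe ev (cycle_mem_trans (mem_cycleMl cue coue) ue_e) uv.
Qed.

Lemma diff_adj_common_nbr e f w v (H : {group gT}) :
    commute w f -> coprime #[w] #[f] -> commute e f -> coprime #[e] #[f] ->
    prime #[e] -> prime #[f] -> w \in H -> f \in H ->
    e \in <[v]> -> f \in <[v]> -> w \notin <[v]> ->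
  exists z, [/\ z \in H, diff_adj v z & diff_adj z (e * f)].
Proof.
move=> cwf cowf cef coef pe pf wH fH ev fv wv.
have e1 : e != 1 by rewrite -order_gt1 prime_gt1.
have f1 : f != 1 by rewrite -order_gt1 prime_gt1.
have [ew | eNw] := boolP (e \in <[w]>).
  have fNw : f \notin <[w]>.
    apply: contraL cowf => /order_dvdG fw.
    by rewrite coprime_sym prime_coprime // negbK.
  exists w; split=> //.
    apply: (diff_adj_witness e1 ev ew) => //.
    by apply: contra fNw; apply: cycle_mem_trans.
  by apply: diff_adj_mul => //; apply: contra wv => /cycle_mem_trans; apply.
have wf_f : f \in <[w * f]> := mem_cycleMr cwf cowf.
have eNwf : e \notin <[w * f]>.
  by apply: contra eNw; apply: coprime_mem_cycleM; rewrite // coprime_sym.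
exists (w * f); split; first by rewrite groupM.
  apply: (diff_adj_witness f1 fv wf_f).
    by apply: contra eNwf; apply: cycle_mem_trans.
  by apply: contra wv; apply: cycle_mem_trans (mem_cycleMl cwf cowf).
rewrite cef; apply: diff_adj_mul; rewrite 1?coprime_sym //.
apply: contra wv => wf_in_f; apply: cycle_mem_trans fv.
exact: cycle_mem_trans (mem_cycleMl cwf cowf) wf_in_f.
Qed.

Lemma proper_cycle_elt v : v != 1 -> ~~ prime #[v] ->
  exists u, [/\ u \in <[v]>, u != 1 & v \notin <[u]>].
Proof.
move=> v1 npv; have v_gt1 : 1 < #[v] by rewrite order_gt1.
have pr : prime (pdiv #[v]) := pdiv_prime v_gt1.
exists (v ^+ pdiv #[v]); split; first exact: mem_cycle.
  rewrite -order_dvdn; apply: contra npv => /(prime_nt_dvdP pr) v_pdiv.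
  by rewrite v_pdiv // order_eq1.
apply: contraL (pdiv_dvd #[v]) => v_in.
have : generator <[v]> (v ^+ pdiv #[v]).
  by rewrite /generator eqEsubset cycleX cycle_subG andbT; apply: v_in.
by rewrite generator_coprime coprime_sym prime_coprime.
Qed.

Lemma proper_cycle_coprime p q v : prime p -> prime q -> p != q ->
    v != 1 -> ~~ prime #[v] ->
  exists u, [/\ u \in <[v]>, u != 1, v \notin <[u]> & coprime #[u] p || coprime #[u] q].
Proof.
move=> pp pq npq v1 npv.
have [co_v | ] := boolP (coprime #[v] p || coprime #[v] q).
  have [u [uv u1 vNu]] := proper_cycle_elt v1 npv.
  exists u; split=> //; have /order_dvdG u_dvd_v := uv.
  by case/orP: co_v => co; rewrite (coprime_dvdl u_dvd_v co) ?orbT.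
rewrite negb_or ![coprime #[v] _]coprime_sym !prime_coprime // !negbK.
case/andP=> p_v q_v.
have co_p : coprime #[v.`_p^'] p.
  by apply: (pnat_coprime (p_elt_constt _ _)); rewrite pnatNK pnat_id.
exists v.`_p^'; rewrite co_p; split=> //; first exact: cycle_constt.
  apply: contra npq => /eqP/constt1P; rewrite /p_elt pnatNK => p_v_elt.
  by have := pnat_dvd q_v p_v_elt; rewrite pnatE // inE eq_sym; apply.
apply: contraL co_p => /order_dvdG v_dvd.
by rewrite coprime_sym prime_coprime // negbK (dvdn_trans p_v).
Qed.

Lemma two_prime_elts (H : {group gT}) : 2 <= size (primes #|H|) ->
  exists a b, [/\ a \in H, b \in H, prime #[a], prime #[b] & #[a] != #[b]].
Proof.
move=> two; set ps := primes #|H|.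
have [p_in q_in] : nth 0 ps 0 \in ps /\ nth 0 ps 1 \in ps.
  by rewrite !mem_nth // (leq_trans _ two).
have npq : nth 0 ps 0 != nth 0 ps 1.
  by rewrite nth_uniq ?primes_uniq // (leq_trans _ two).
move: p_in q_in npq; rewrite !mem_primes => /and3P[pp _ pH] /and3P[pq _ qH] npq.
have [a aH oa] := Cauchy pp pH; have [b bH ob] := Cauchy pq qH.
by exists a, b; rewrite oa ob.
Qed.

Lemma diff_walk_of_path (G : {set gT}) x s :
  x \in G -> all (mem G) s -> path (@diff_adj gT) x s -> diff_walk G x s.
Proof.
rewrite /diff_walk; elim: s x => //= z s IH x xG /andP[zG sG] /andP[xz zs].
have /andP[s_vert _] := IH z zG sG zs.
rewrite xz zs s_vert !andbT inE zG; apply/existsP.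
by exists x; rewrite xG diff_adjC.
Qed.

Lemma diff_walk_join (G : {set gT}) x y s t :
    y \in diff_vert G -> diff_walk G x s -> diff_walk G y t -> last x s = last y t ->
  exists r, [/\ diff_walk G x r, last x r = y & size r = size s + size t].
Proof.
move=> yV /andP[sV xs] /andP[tV yt] st.
exists (s ++ rev (belast y t)); split.
- rewrite /diff_walk all_cat sV all_rev cat_path xs st rev_path /=.
  have -> : path (fun z w => diff_adj w z) y t = path (@diff_adj gT) y t.
    by apply: eq_path => z w; apply: diff_adjC.
  rewrite yt andbT; apply/allP => z /mem_belast; rewrite inE.
  by case/predU1P=> [-> // | zt]; apply: (allP tV).
- rewrite last_cat st; elim: t y {yV tV yt st} => //= z t IH y.
  by rewrite rev_cons last_rcons.
- by rewrite size_cat size_rev size_belast.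
Qed.

Section CentralPair.
Variables (G : {group gT}) (a b : gT).
Hypotheses (ncycG : ~~ cyclic G) (aZ : a \in 'Z(G)) (bZ : b \in 'Z(G)).
Hypotheses (pa : prime #[a]) (pb : prime #[b]) (nab : #[a] != #[b]).

Let aG : a \in G. Proof. by case/centerP: aZ. Qed.
Let bG : b \in G. Proof. by case/centerP: bZ. Qed.
Let cGa x : x \in G -> commute x a.
Proof. by case/centerP: aZ => _ ca /ca /commute_sym. Qed.
Let cGb x : x \in G -> commute x b.
Proof. by case/centerP: bZ => _ cb /cb /commute_sym. Qed.
Let cab : commute a b. Proof. exact: cGb. Qed.
Let cba : commute b a. Proof. exact: cGa. Qed.
Let coab : coprime #[a] #[b]. Proof. by rewrite prime_coprime // dvdn_prime2. Qed.
Let coba : coprime #[b] #[a]. Proof. by rewrite coprime_sym. Qed.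
Let a1 : a != 1. Proof. by rewrite -order_gt1 prime_gt1. Qed.
Let b1 : b != 1. Proof. by rewrite -order_gt1 prime_gt1. Qed.

Lemma central_pair_common_nbr v : v \in G -> a \in <[v]> -> b \in <[v]> ->
  exists z, [/\ z \in G, diff_adj v z & diff_adj z (a * b)].
Proof.
move=> vG av bv.
have [g gG gNv] : exists2 g, g \in G & g \notin <[v]>.
  apply/subsetPn; apply: contra ncycG => sGv; apply/cyclicP; exists v.
  by apply/eqP; rewrite eqEsubset sGv cycle_subG.
have sgG : <[g]> \subset G by rewrite cycle_subG.
have [wNv | wNv] : g.`_#[b] \notin <[v]> \/ g.`_#[b]^' \notin <[v]>.
- apply/orP; rewrite -negb_and; apply: contra gNv => /andP[gb gb'].
  by rewrite -(consttC #[b] g) groupM.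
- have wG : g.`_#[b] \in G by rewrite (subsetP sgG) ?cycle_constt.
  have co : coprime #[g.`_#[b]] #[a].
    by apply: (pnat_coprime (p_elt_constt _ _)); rewrite pnatE.
  have [z [zG vz zc]] :=
    diff_adj_common_nbr (cGa wG) co cba coba pb pa wG aG bv av wNv.
  by exists z; rewrite cab.
- have wG : g.`_#[b]^' \in G by rewrite (subsetP sgG) ?cycle_constt.
  have co : coprime #[g.`_#[b]^'] #[b].
    by apply: (pnat_coprime (p_elt_constt _ _)); rewrite pnatNK pnat_id.
  exact: diff_adj_common_nbr (cGb wG) co cab coab pa pb wG bG av bv wNv.
Qed.

Lemma central_pair_vert : a * b \in diff_vert G.
Proof.
have abG : a * b \in G by rewrite groupM.
have [z [zG abz _]] :=
  central_pair_common_nbr abG (mem_cycleMl cab coab) (mem_cycleMr cab coab).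
by rewrite inE abG; apply/existsP; exists z; rewrite zG.
Qed.

Lemma central_pair_reach v : v \in diff_vert G ->
  exists t, [/\ diff_walk G v t, last v t = a * b & size t <= 2].
Proof.
rewrite inE => /andP[vG /existsP[y /andP[_ vy]]].
have [v1 npv] := diff_adj_composite vy.
have abG : a * b \in G by rewrite groupM.
have svG : <[v]> \subset G by rewrite cycle_subG.
have walk1 : diff_adj v (a * b) ->
    exists t, [/\ diff_walk G v t, last v t = a * b & size t <= 2].
  by move=> vab; exists [:: a * b]; rewrite diff_walk_of_path //= ?abG ?vab.
have walk2 z : z \in G -> diff_adj v z -> diff_adj z (a * b) ->
    exists t, [/\ diff_walk G v t, last v t = a * b & size t <= 2].
  move=> zG vz zab; exists [:: z; a * b].
  by rewrite diff_walk_of_path //= ?zG ?abG ?vz ?zab.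
have [av | aNv] := boolP (a \in <[v]>); have [bv | bNv] := boolP (b \in <[v]>).
- have [z [zG vz zab]] := central_pair_common_nbr vG av bv; exact: walk2 zG vz zab.
- by apply: walk1; apply: diff_adj_mul => //; apply: notin_prime_cycle.
- by apply: walk1; rewrite cab; apply: diff_adj_mul => //; apply: notin_prime_cycle.
have [u [uv u1 vNu /orP[co | co]]] := proper_cycle_coprime pa pb nab v1 npv.
- have uG : u \in G by rewrite (subsetP svG).
  have [vz zc] := diff_adj_via_mul (cGa uG) cab co coab pa pb uv u1 vNu aNv bNv.
  by apply: (walk2 (u * a)); rewrite ?groupM.
- have uG : u \in G by rewrite (subsetP svG).
  have [vz zc] := diff_adj_via_mul (cGb uG) cba co coba pb pa uv u1 vNu bNv aNv.
  by apply: (walk2 (u * b)); rewrite ?groupM // cab.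
Qed.

End CentralPair.

End DifferenceGraph.

Theorem theorem4p11 (gT : finGroupType) (G : {group gT}) :
  ~~ cyclic G ->
  ~ (exists (H K : {group gT}) (n : nat),
       [/\ H \x K = G, cyclic H, odd #|H|, 3 <= n & K \isog 'Q_(2 ^ n)]) ->
  2 <= size (primes #|'Z(G)|) ->
  diff_connected_diam_le G 5.
Proof.
move=> ncycG _ twoZ.
have [a [b [aZ bZ pa pb nab]]] := two_prime_elts twoZ.
split; first by exists (a * b); apply: central_pair_vert ncycG aZ bZ pa pb nab.
move=> x y xV yV.
have [s [xs sc s2]] := central_pair_reach ncycG aZ bZ pa pb nab xV.
have [t [yt tc t2]] := central_pair_reach ncycG aZ bZ pa pb nab yV.
have [r [xr ry size_r]] := diff_walk_join yV xs yt (etrans sc (esym tc)).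
by exists r; split=> //; rewrite size_r (leq_trans (leq_add s2 t2)).
Qed.
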